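(* Let $(A_C,\mathcal R_A)$ be an autocatalytic core of a CRN and let $\overline{\mathbb S}_C=(\mathbb S)_{A_C}^{\mathcal R_A}$ (a square invertible matrix). Then every column of $\overline{\mathbb S}_C^{-1}$ is semi-positive, i.e. $\overline{\mathbb S}_C^{-1}$ has only nonnegative entries and no zero column.
   Context: A chemical reaction network (CRN) consists of a finite species set $\mathcal S$ and a finite set $\mathcal R$ of reactions; each reaction $r$ is written $r^-\to r^+$ with input complex $r^-\in\mathbb Z_{\ge0}^{\mathcal S}$ and output complex $r^+\in\mathbb Z_{\ge0}^{\mathcal S}$. The input and output matrices $\mathbb S^-,\mathbb S^+$ are the $\mathcal S\times\mathcal R$ matrices whose column indexed by $r$ is $r^-$, resp. $r^+$; the stoichiometric matrix is $\mathbb S=\mathbb S^+-\mathbb S^-$. For a matrix $\mathbb A$ with rows indexed by $\mathcal S$ and columns by $\mathcal R$ and subsets $M\subseteq\mathcal S$, $N\subseteq\mathcal R$, $(\mathbb A)_M^N$ is the submatrix with rows in $M$ and columns in $N$. For a vector $\mathbf v$: $\mathbf v\gg\mathbf 0$ means all entries are $>0$; $\mathbf v>\mathbf 0$ (semi-positive) means all entries are $\ge0$ and $\mathbf v\ne\mathbf 0$. A motif is a pair $(\mathcal M,\mathcal R')$ with $\mathcal M\subseteq\mathcal S$, $\mathcal R'\subseteq\mathcal R$. It is exclusively autocatalytic if: (i) there is $\mathbf v\in\mathbb R^{\mathcal R'}$, $\mathbf v\gg\mathbf0$, with $(\mathbb S)_{\mathcal M}^{\mathcal R'}\mathbf v\gg\mathbf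 0$; (ii) every row of $(\mathbb S^-)_{\mathcal M}^{\mathcal R'}$ is semi-positive; (iii) every column of $(\mathbb S^-)_{\mathcal M}^{\mathcal R'}$ is semi-positive. An autocatalytic core is an exclusively autocatalytic motif $(A_C,\mathcal R_A)$ such that no motif $(\mathcal M',\mathcal R'')\neq(A_C,\mathcal R_A)$ with $\mathcal M'\subseteq A_C$ and $\mathcal R''\subseteq\mathcal R_A$ is exclusively autocatalytic. *)

From HB Require Import structures.
From mathcomp Require Import all_boot all_order all_algebra.
Set Implicit Arguments. Unset Strict Implicit. Unset Printing Implicit Defensive.
Import Order.TTheory GRing.Theory Num.Theory.
Local Open Scope ring_scope.

(* A CRN is given by a finite species type [Sp], a finite reaction type [Rx],
   and the input / output matrices [inp out : Sp -> Rx -> nat]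
   (inp i r = (r^-)_i, out i r = (r^+)_i). *)

Definition stoich (R : numDomainType) (Sp Rx : finType)
  (inp out : Sp -> Rx -> nat) (i : Sp) (r : Rx) : R :=
  (out i r)%:R - (inp i r)%:R.

(* Exclusively autocatalytic motif (M, N).  Entries of S^- are natural numbers,
   so "row/column semi-positive" means "some entry is > 0".
   Motifs are required to be nonempty (M != set0). *)
Definition excl_autocat (R : realFieldType) (Sp Rx : finType)
  (inp out : Sp -> Rx -> nat) (M : {set Sp}) (N : {set Rx}) : Prop :=
  [/\ M != set0,
      (exists v : Rx -> R,
          (forall r, r \in N -> 0 < v r) /\
          (forall i, i \in M -> 0 < \sum_(r in N) stoich R inp out i r * v r)),
      (forall i, i \in M -> exists2 r, r \in N & (0 < inp i r)%N) &
      (forall r, r \in N -> exists2 i, i \in M & (0 < inp i r)%N)].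

Definition autocat_core (R : realFieldType) (Sp Rx : finType)
  (inp out : Sp -> Rx -> nat) (A : {set Sp}) (N : {set Rx}) : Prop :=
  excl_autocat R inp out A N /\
  forall (M' : {set Sp}) (N' : {set Rx}), M' \subset A -> N' \subset N ->
    (M', N') <> (A, N) -> ~ excl_autocat R inp out M' N'.

Definition is_inverse_sub (R : realFieldType) (Sp Rx : finType)
  (inp out : Sp -> Rx -> nat) (A : {set Sp}) (N : {set Rx})
  (B : Rx -> Sp -> R) : Prop :=
  (forall i k, i \in A -> k \in A ->
     \sum_(r in N) stoich R inp out i r * B r k = (i == k)%:R) /\
  (forall r l, r \in N -> l \in N ->
     \sum_(i in A) B r i * stoich R inp out i l = (r == l)%:R).

From HB Require Import structures.
From mathcomp Require Import all_boot all_order all_algebra.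
Import Order.TTheory GRing.Theory Num.Theory.
Local Open Scope ring_scope.

(* All
   the work is done by minimality of the core:
   - a flux w >= 0 on N with S w >> 0 on A is nowhere zero on N, since its
     support would otherwise give a smaller exclusively autocatalytic motif;
   - hence S is inverse positive: S x >= 0 on A forces x >= 0 on N (move from
     an autocatalytic flux v along x until some entry vanishes); in particular
     the restriction of S to (A, N) has trivial kernel;
   - every species of A has a private reaction of N consuming it and no other
     species of A (else drop the species), so #|A| <= #|N|. *)

Lemma injective_mx_inverse (F : fieldType) m n (M : 'M[F]_(m, n)) :
  (m <= n)%N -> (forall w : 'cV_n, M *m w = 0 -> w = 0) ->
  exists B : 'M[F]_(n, m), M *m B = 1%:M /\ B *m M = 1%:M.
Proof.
move=> le_mn injM.
have freeMT : row_free M^T.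
  rewrite -kermx_eq0; apply/eqP/row_matrixP => i; rewrite row0.
  apply: trmx_inj; rewrite trmx0; apply: injM.
  apply: trmx_inj; rewrite trmx_mul trmxK trmx0.
  by rewrite -row_mul mulmx_ker row0.
have eq_mn : m = n.
  apply/eqP; rewrite eqn_leq le_mn /=.
  by move: freeMT => /eqP <-; rewrite mxrank_tr rank_leq_row.
move: M freeMT {injM}; rewrite eq_mn => M.
rewrite row_free_unit unitmx_tr => unitM.
by exists (invmx M); split; [exact: mulmxV | exact: mulVmx].
Qed.

Lemma enum_rank_in_eq (T : finType) (D : {set T}) d (dD : d \in D) :
  {in D &, forall x y, (enum_rank_in dD x == enum_rank_in dD y) = (x == y)}.
Proof. exact/inj_in_eq/enum_rank_in_inj. Qed.

Section AutocatalyticCore.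
Context {R : realFieldType} {Sp Rx : finType} {inp out : Sp -> Rx -> nat}.
Context {A : {set Sp}} {N : {set Rx}}.
Hypothesis core : autocat_core R inp out A N.
Local Notation S := (stoich R inp out).

(* A nonnegative flux that makes every species of A grow uses every reaction
   of N: otherwise its support is a smaller exclusively autocatalytic motif. *)
Lemma core_flux_support (w : Rx -> R) :
  (forall r, r \in N -> 0 <= w r) ->
  (forall i, i \in A -> 0 < \sum_(r in N) S i r * w r) ->
  forall r, r \in N -> w r != 0.
Proof.
move=> w_ge0 Sw_gt0 r0 r0N; apply/negP => /eqP w_r0.
have [[A_n0 _ _ cols] minimal] := core.
pose N' := [set r in N | 0 < w r].
pose M' := [set i in A | [exists r in N', (0 < inp i r)%N]].
have N'_cols r : r \in N' -> exists2 i, i \in M' & (0 < inp i r)%N.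
  move=> rN'; have /andP[rN _] : (r \in N) && (0 < w r) by move: rN'; rewrite inE.
  have [i iA ir] := cols r rN; exists i => //.
  by rewrite inE iA; apply/existsP; exists r; rewrite rN' ir.
have sum_N' i : \sum_(r in N') S i r * w r = \sum_(r in N) S i r * w r.
  rewrite [RHS](bigID (fun r => 0 < w r)) /= [X in _ + X]big1 ?addr0.
    by apply: eq_bigl => r; rewrite inE.
  move=> r /andP[rN]; rewrite -leNgt => w_le0.
  have -> : w r = 0 by apply/eqP; rewrite eq_le w_le0 w_ge0.
  by rewrite mulr0.
apply: (minimal M' N').
- by apply/subsetP => i; rewrite inE => /andP[].
- by apply/subsetP => r; rewrite inE => /andP[].
- by case=> _ eq_N'; move: r0N; rewrite -eq_N' inE w_r0 ltxx andbF.
split.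
- have /set0Pn[i iA] := A_n0.
  have [r /andP[rN w_r]|] := pickP [pred r in N | w r != 0].
    have rN' : r \in N' by rewrite inE rN lt_def w_r w_ge0.
    by have [j jM' _] := N'_cols r rN'; apply/set0Pn; exists j.
  move=> w0; have := Sw_gt0 i iA; rewrite big1 ?ltxx // => r rN.
  by have := w0 r; rewrite /= rN /= => /negbFE/eqP->; rewrite mulr0.
- exists w; split; first by move=> r; rewrite inE => /andP[].
  by move=> i; rewrite inE sum_N' => /andP[iA _]; apply: Sw_gt0.
- by move=> i; rewrite inE => /andP[_ /existsP[r /andP[rN' ir]]]; exists r.
- exact: N'_cols.
Qed.

(* Inverse positivity: if S x >= 0 on A then x >= 0 on N.  Otherwise, moving
   from an autocatalytic flux v along x as far as positivity allows yields a
   flux v + t x >= 0 with S (v + t x) >> 0 that vanishes somewhere on N. *)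
Lemma core_inverse_positive (x : Rx -> R) :
  (forall i, i \in A -> 0 <= \sum_(r in N) S i r * x r) ->
  forall r, r \in N -> 0 <= x r.
Proof.
move=> Sx_ge0 r1 r1N; rewrite leNgt; apply/negP => x_r1.
have [[_ [v [v_gt0 Sv_gt0]] _ _] _] := core.
pose neg := [pred r | (r \in N) && (x r < 0)].
have neg_r1 : neg r1 by rewrite /= r1N x_r1.
have [r0 /andP[r0N x_r0] min_r0] := arg_minP (fun r => v r / - x r) neg_r1.
pose t := v r0 / - x r0.
have t_gt0 : 0 < t by rewrite divr_gt0 ?v_gt0 ?oppr_gt0.
have : v r0 + t * x r0 != 0.
  apply: (core_flux_support (fun r => v r + t * x r)) r0N.
  - move=> r rN /=; have [x_r|x_r] := ltP (x r) 0.
      have /min_r0 : neg r by rewrite /= rN x_r.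
      by rewrite -/t ler_pdivlMr ?oppr_gt0 // mulrN -subr_ge0 opprK.
    by apply: addr_ge0; [exact/ltW/v_gt0 | exact: mulr_ge0 (ltW t_gt0) x_r].
  - move=> i iA; under eq_bigr do rewrite mulrDr mulrCA.
    rewrite big_split /= -mulr_sumr ltr_wpDr ?Sv_gt0 //.
    exact: mulr_ge0 (ltW t_gt0) (Sx_ge0 i iA).
have x_r0_neq0 : x r0 != 0 by rewrite lt_eqF.
by rewrite /t invrN mulrN mulNr -mulrA mulVf // mulr1 subrr eqxx.
Qed.

Lemma core_kernel_trivial (x : Rx -> R) :
  (forall i, i \in A -> \sum_(r in N) S i r * x r = 0) ->
  forall r, r \in N -> x r = 0.
Proof.
move=> Sx0 r rN; apply/eqP; rewrite eq_le -oppr_ge0.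
rewrite (core_inverse_positive (fun r => - x r)) ?core_inverse_positive //.
  by move=> i iA; rewrite Sx0.
by move=> i iA; under eq_bigr do rewrite mulrN; rewrite sumrN Sx0 ?oppr0.
Qed.

Definition private_reaction (i : Sp) (r : Rx) : bool :=
  [&& r \in N, (0 < inp i r)%N & [forall j in A, (j != i) ==> (inp j r == 0)%N]].

(* Every species of the core has a private reaction: otherwise every reaction
   consuming i also consumes another species of A, and (A :\ i, N) would be a
   smaller exclusively autocatalytic motif. *)
Lemma core_private_reaction i : i \in A -> exists r, private_reaction i r.
Proof.
move=> iA; have [r|no_private] := pickP (private_reaction i); first by exists r.
exfalso.
have [[_ [v [v_gt0 Sv_gt0]] rows cols] minimal] := core.
have shared r : r \in N -> (0 < inp i r)%N ->
    exists2 j, j \in A :\ i & (0 < inp j r)%N.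
  move=> rN ir; have := negbT (no_private r); rewrite /private_reaction rN ir /=.
  rewrite negb_forall => /existsP[j]; rewrite !negb_imply -lt0n.
  by case/and3P=> jA ji jr; exists j; rewrite // !inE ji.
apply: (minimal (A :\ i) N); rewrite ?subsetDl ?subxx //.
  by case=> eq_A; move: iA; rewrite -{1}eq_A !inE eqxx.
split.
- have [r rN ir] := rows i iA; have [j jA _] := shared r rN ir.
  by apply/set0Pn; exists j.
- by exists v; split=> // j /setD1P[_ /Sv_gt0].
- by move=> j /setD1P[_ /rows].
- move=> r rN; have [j jA jr] := cols r rN.
  have [eq_ji | ji] := eqVneq j i; first by apply: shared; rewrite // -eq_ji.
  by exists j; rewrite // !inE ji.
Qed.

(* Distinct species have distinct private reactions, so #|A| <= #|N|. *)
Lemma core_card_le : (#|A| <= #|N|)%N.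
Proof.
have [[A_n0 _ _ _] _] := core; have /set0Pn[a aA] := A_n0.
have [r_a _] := core_private_reaction _ aA.
pose f i := odflt r_a [pick r | private_reaction i r].
have f_private i : i \in A -> private_reaction i (f i).
  move=> iA; rewrite /f; case: pickP => [r //|none].
  by have [r] := core_private_reaction _ iA; rewrite none.
have f_inj : {in A &, injective f}.
  move=> i j iA jA eq_f; apply/eqP; apply: contraT => ij.
  have /and3P[_ jf _] := f_private j jA.
  have /and3P[_ _ /forallP/(_ j)] := f_private i iA.
  by rewrite jA (eq_sym j) ij /= => /eqP jf0; rewrite -eq_f jf0 in jf.
rewrite -(card_in_imset f_inj); apply: subset_leq_card.
by apply/subsetP => _ /imsetP[i iA ->]; case/and3P: (f_private i iA).
Qed.

(* A column y with S y = e_k on A is nonnegative by inverse positivity, and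
   nonzero since its k-th product with S is 1. *)
Lemma core_unit_preimage k (y : Rx -> R) : k \in A ->
  (forall i, i \in A -> \sum_(r in N) S i r * y r = (i == k)%:R) ->
  (forall r, r \in N -> 0 <= y r) /\ (exists2 r, r \in N & y r != 0).
Proof.
move=> kA Sy; split.
  by apply: core_inverse_positive => i iA; rewrite Sy ?ler0n.
apply/exists_inP; apply: contraT => /exists_inPn y0.
have := Sy k kA; rewrite eqxx big1 => [/esym/eqP|r rN].
  by rewrite oner_eq0.
by move: (y0 r rN); rewrite negbK => /eqP->; rewrite mulr0.
Qed.

Section CoreMatrix.
(* (S)_A^N as a matrix indexed by enumerations of A and N; a and b are fixed
   elements of A and N used to define the inverse enumerations. *)
Context {a : Sp} {b : Rx} (aA : a \in A) (bN : b \in N).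
Local Notation rankA := (enum_rank_in aA).
Local Notation rankN := (enum_rank_in bN).

Definition core_mx : 'M[R]_(#|A|, #|N|) :=
  \matrix_(i, j) S (enum_val i) (enum_val j).

Lemma core_mx_mull p (W : 'M[R]_(#|N|, p)) i c : i \in A ->
  (core_mx *m W) (rankA i) c = \sum_(r in N) S i r * W (rankN r) c.
Proof.
move=> iA; rewrite mxE [RHS]big_enum_val /=.
by apply: eq_bigr => j _; rewrite mxE enum_rankK_in // enum_valK_in.
Qed.

Lemma core_mx_mulr p (W : 'M[R]_(p, #|A|)) c r : r \in N ->
  (W *m core_mx) c (rankN r) = \sum_(i in A) W c (rankA i) * S i r.
Proof.
move=> rN; rewrite mxE [RHS]big_enum_val /=.
by apply: eq_bigr => j _; rewrite mxE enum_rankK_in // enum_valK_in.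
Qed.

Lemma core_mx_inverse :
  exists B : 'M[R]_(#|N|, #|A|), core_mx *m B = 1%:M /\ B *m core_mx = 1%:M.
Proof.
apply: injective_mx_inverse core_card_le _ => w Sw0.
apply/matrixP => j c; rewrite mxE -(enum_valK_in bN j) [c]ord1.
apply: (core_kernel_trivial (fun r => w (rankN r) 0)) (enum_valP j).
by move=> i iA; rewrite -core_mx_mull // Sw0 mxE.
Qed.

End CoreMatrix.

Lemma core_inverse : exists B : Rx -> Sp -> R, is_inverse_sub inp out A N B.
Proof.
have [[A_n0 _ _ _] _] := core; have /set0Pn[a aA] := A_n0.
have [b /and3P[bN _ _]] := core_private_reaction _ aA.
have [B [SB BS]] := core_mx_inverse aA bN.
exists (fun r k => B (enum_rank_in bN r) (enum_rank_in aA k)); split.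
  by move=> i k iA kA; rewrite -(core_mx_mull aA bN) // SB mxE enum_rank_in_eq.
by move=> r l rN lN; rewrite -(core_mx_mulr aA bN) // BS mxE enum_rank_in_eq.
Qed.

End AutocatalyticCore.

Theorem mainTheorem6 (R : realFieldType) (Sp Rx : finType)
  (inp out : Sp -> Rx -> nat) (AC : {set Sp}) (RA : {set Rx}) :
  autocat_core R inp out AC RA ->
  exists B : Rx -> Sp -> R,
    is_inverse_sub inp out AC RA B /\
    (forall k, k \in AC ->
       (forall r, r \in RA -> 0 <= B r k) /\ (exists2 r, r \in RA & B r k != 0)).
Proof.
move=> core; have [B [SB BS]] := core_inverse core.
exists B; split=> // k kA.
exact: (core_unit_preimage core k (B^~ k) kA (fun i iA => SB i k iA kA)).
Qed.
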